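(* Let $p,q\in\mathbb{Z}$ be such that the polynomial $x^3-px-q$ is irreducible over $\mathbb{Q}$ and has exactly one real root $\theta$. Then there exists a Peck sequence for the pair $(\theta,\theta^2)$.
   Context: For $x\in\mathbb{R}$, $\|x\|$ denotes the distance from $x$ to the nearest integer. A Peck sequence for a pair $(\sigma,\tau)$ of real numbers is a strictly increasing sequence $(s_n)_{n\ge1}$ of positive integers for which there exist constants $M_1,M_2>0$ and an infinite subsequence $(\psi_n)_{n\ge1}$ of $(s_n)$ with all $\psi_n\ge 2$, such that for all $n$: $\max\{\|s_n\sigma\|,\|s_n\tau\|\}<\frac{M_1}{s_n^{1/2}}$ and $\|\psi_n\sigma\|<\frac{M_2}{\psi_n^{1/2}\log\psi_n}$. *)

From HB Require Import structures.
From mathcomp Require Import all_boot all_order all_algebra.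
From Stdlib Require Import Reals ZArith.

Set Implicit Arguments. Unset Strict Implicit. Unset Printing Implicit Defensive.

Import GRing.Theory.

Section RingPart.
Local Open Scope ring_scope.
Definition Z_to_rat (z : Z) : rat :=
  if Z.leb 0 z then (Z.to_nat z)%:R else - (Z.to_nat (- z)%Z)%:R.

Definition cubic_pq (p q : Z) : {poly rat} :=
  'X^3 - (Z_to_rat p)%:P * 'X - (Z_to_rat q)%:P.

Definition cubic_irreducible_Q (p q : Z) : Prop :=
  irreducible_poly (cubic_pq p q).
End RingPart.

Local Open Scope R_scope.

Definition dist_int (x : R) : R :=
  Rmin (x - IZR (Int_part x)) (IZR (Int_part x) + 1 - x).

Definition peck_sequence (sigma tau : R) (s : nat -> nat) : Prop :=
  (forall n, (0 < s n)%nat) /\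
  (forall n, (s n < s (S n))%nat) /\
  exists M1 M2 : R, 0 < M1 /\ 0 < M2 /\
  (forall n, Rmax (dist_int (INR (s n) * sigma)) (dist_int (INR (s n) * tau))
             < M1 / sqrt (INR (s n))) /\
  exists phi : nat -> nat,
    (forall n, (phi n < phi (S n))%nat) /\
    (forall n, (2 <= s (phi n))%nat /\
               dist_int (INR (s (phi n)) * sigma)
                 < M2 / (sqrt (INR (s (phi n))) * ln (INR (s (phi n))))).

(* The other two roots of [x^3 - p x - q] are [θ' = -θ/2 + i v] and its conjugate, [v > 0].
   By Dirichlet's pigeonhole principle [Z[θ]] contains infinitely many elements of
   bounded norm and arbitrarily small real embedding; two of them congruent modulo their
   common norm have a unit as quotient, which yields a unit [ε > 1] with [ε |ε'|^2 = 1].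
   The traces [s_n = Tr ε^n = ε^n + 2 Re ε'^n] are integers, and
   [Tr (ε^n θ) - s_n θ = 2 Re (ε'^n (θ' - θ))], likewise for [θ^2]; hence
   [‖s_n θ‖, ‖s_n θ^2‖ = O(|ε'|^n) = O(s_n^(-1/2))].  Writing
   [ε'^n (θ' - θ) = |ε'|^n ρ e^(i (n φ + c))], the ratio [φ / π] is irrational, so an
   inhomogeneous Dirichlet argument makes [|cos (n φ + c)| = O(1/n) = O(1 / log s_n)] for
   infinitely many [n]. *)

From Stdlib Require Import Reals ZArith Lia Lra Znumtheory List Classical ClassicalEpsilon.
From mathcomp Require ssrbool ssrnat all_boot all_algebra Rstruct ring.

Open Scope R_scope.

Definition no_rational_root (p q : Z) : Prop :=
  forall m n : Z, n <> 0%Z ->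
  (IZR m / IZR n) ^ 3 - IZR p * (IZR m / IZR n) - IZR q <> 0.

Module IrreducibleCubic.
Import all_boot all_algebra Rstruct ring.
Import GRing.Theory.

Lemma ratr_Z_to_rat (z : Z) : (ratr (Z_to_rat z) : R) = IZR z.
Proof.
rewrite /Z_to_rat; case: (Z.leb_spec 0 z) => Hz.
- by rewrite rmorph_nat -INRE INR_IZR_INZ Z2Nat.id.
- rewrite rmorphN rmorph_nat -INRE INR_IZR_INZ Z2Nat.id; last lia.
  rewrite opp_IZR; exact: Ropp_involutive.
Qed.

Lemma size_cubic_pq p q : size (cubic_pq p q) = 4%N.
Proof.
rewrite /cubic_pq -addrA size_polyDl ?size_polyXn //.
rewrite -opprD size_polyN; apply: (leq_ltn_trans (size_polyD _ _)).
rewrite gtn_max mul_polyC (leq_ltn_trans (size_scale_leq _ _)) ?size_polyX //.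
by rewrite (leq_ltn_trans (size_polyC_leq1 _)).
Qed.

Lemma irreducible_no_rational_root p q :
  cubic_irreducible_Q p q -> no_rational_root p q.
Proof.
move=> Hirr m n Hn H.
have Hr : root (cubic_pq p q) (GRing.mul (Z_to_rat m) (GRing.inv (Z_to_rat n))).
  apply/eqP; apply: (@fmorph_inj _ R ratr).
  rewrite /cubic_pq !hornerE rmorph0 !rmorphB !rmorphM /= !ratr_Z_to_rat.
  rewrite fmorphV /= ratr_Z_to_rat.
  move: H; rewrite RpowE !RminusE !RmultE !RdivE => H.
  by apply: (etrans _ (etrans H R0E)); ring.
move: Hr; rewrite root_factor_theorem => /(Hirr.2 _).
by rewrite size_XsubC => /(_ isT)/eqp_size; rewrite size_XsubC size_cubic_pq.
Qed.

End IrreducibleCubic.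

Lemma Int_part_bounds x : IZR (Int_part x) <= x < IZR (Int_part x) + 1.
Proof. destruct (base_Int_part x); lra. Qed.

Lemma Int_part_eq_close x y : Int_part x = Int_part y -> Rabs (x - y) < 1.
Proof.
  intros E. destruct (Int_part_bounds x), (Int_part_bounds y). rewrite E in *.
  apply Rabs_def1; lra.
Qed.

Lemma dist_int_le x (k : Z) : dist_int x <= Rabs (x - IZR k).
Proof.
  unfold dist_int. destruct (Int_part_bounds x) as [H1 H2].
  destruct (Z_le_gt_dec k (Int_part x)) as [Hk|Hk].
  - apply IZR_le in Hk. eapply Rle_trans; [apply Rmin_l|]. rewrite Rabs_right; lra.
  - assert (Hk' : (Int_part x + 1 <= k)%Z) by lia. apply IZR_le in Hk'. rewrite plus_IZR in Hk'.
    eapply Rle_trans; [apply Rmin_r|]. rewrite Rabs_left1; lra.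
Qed.

Lemma dist_int_pos x : (forall k : Z, x <> IZR k) -> 0 < dist_int x.
Proof.
  intros H. unfold dist_int. destruct (Int_part_bounds x) as [H1 H2].
  assert (x <> IZR (Int_part x)) by apply H. apply Rmin_glb_lt; lra.
Qed.

Lemma INR_Z_to_nat (z : Z) : (0 <= z)%Z -> INR (Z.to_nat z) = IZR z.
Proof. intros H. rewrite INR_IZR_INZ, Z2Nat.id; auto. Qed.

Lemma lt_INR_up x : 0 < x -> x < INR (Z.to_nat (up x)).
Proof.
  intros Hx. destruct (archimed x) as [A _].
  assert (0 <= up x)%Z by (apply le_IZR; simpl; lra).
  rewrite INR_Z_to_nat; auto.
Qed.

Lemma NoDup_map_seq {A} (f : nat -> A) n s :
  (forall i j, (s <= i)%nat -> (i < j)%nat -> (j < s + n)%nat -> f i <> f j) ->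
  NoDup (map f (seq s n)).
Proof.
  revert s; induction n as [|n IH]; intros s H; simpl. constructor.
  constructor.
  - intros Hin. apply in_map_iff in Hin. destruct Hin as [j [Hj Hin]].
    apply in_seq in Hin. apply (H s j); try lia. congruence.
  - apply IH. intros i j Hi Hij Hj. apply H; lia.
Qed.

Lemma pigeonhole_list {A} (L : list A) (f : nat -> A) :
  (forall k, (k <= length L)%nat -> In (f k) L) ->
  exists i j, (i < j <= length L)%nat /\ f i = f j.
Proof.
  intros H. apply NNPP. intros Hn.
  assert (ND : NoDup (map f (seq 0 (S (length L))))).
  { apply NoDup_map_seq. intros i j _ Hij Hj E. apply Hn. exists i, j. split; [lia|exact E]. }
  assert (I : incl (map f (seq 0 (S (length L)))) L).
  { intros a Ha. apply in_map_iff in Ha. destruct Ha as [k [<- Hk]].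
    apply in_seq in Hk. apply H. lia. }
  pose proof (NoDup_incl_length ND I) as Hl. rewrite length_map, length_seq in Hl. lia.
Qed.

Lemma pigeonhole_frac (g : nat -> R) (B : nat) : (1 <= B)%nat ->
  exists i j, (i < j <= B)%nat /\
    Rabs (g j - g i - IZR (Int_part (g j) - Int_part (g i))) < / INR B.
Proof.
  intros HB.
  set (fr := fun k : nat => g k - IZR (Int_part (g k))).
  assert (Hfr : forall k, 0 <= fr k < 1).
  { intros k. unfold fr. destruct (Int_part_bounds (g k)). lra. }
  assert (HB' : 1 <= INR B) by (apply (le_INR 1); lia).
  set (box := fun k => Int_part (INR B * fr k)).
  assert (Hbox : forall k, (0 <= box k < Z.of_nat B)%Z).
  { intros k. destruct (Hfr k). destruct (Int_part_bounds (INR B * fr k)).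
    assert (0 <= INR B * fr k < INR B) by nra.
    unfold box. split.
    - apply Z.lt_succ_r, lt_IZR. rewrite succ_IZR. lra.
    - apply lt_IZR. rewrite <- INR_IZR_INZ. lra. }
  destruct (pigeonhole_list (seq 0 B) (fun k => Z.to_nat (box k))) as [i [j [Hij E]]].
  - intros k _. apply in_seq. specialize (Hbox k). lia.
  - rewrite length_seq in Hij. exists i, j. split; [lia|].
    assert (E' : box j = box i) by (pose proof (Hbox i); pose proof (Hbox j); lia).
    apply Int_part_eq_close in E'.
    rewrite minus_IZR.
    replace (g j - g i - (IZR (Int_part (g j)) - IZR (Int_part (g i)))) with (fr j - fr i)
      by (unfold fr; ring).
    replace (INR B * fr j - INR B * fr i) with (INR B * (fr j - fr i)) in E' by ring.
    rewrite Rabs_mult, (Rabs_right (INR B)) in E' by lra.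
    apply (Rmult_lt_reg_l (INR B)); [lra|]. rewrite Rinv_r by lra. exact E'.
Qed.

Lemma dirichlet (a : R) (Q : nat) : (1 <= Q)%nat ->
  exists q : nat, (1 <= q <= Q)%nat /\ exists p : Z, Rabs (INR q * a - IZR p) < / INR Q.
Proof.
  intros HQ. destruct (pigeonhole_frac (fun k => INR k * a) Q HQ) as [i [j [Hij H]]].
  exists (j - i)%nat. split; [lia|].
  exists (Int_part (INR j * a) - Int_part (INR i * a))%Z.
  rewrite minus_INR by lia. replace ((INR j - INR i) * a) with (INR j * a - INR i * a) by ring.
  exact H.
Qed.

Definition irrational (a : R) : Prop :=
  forall k : nat, (1 <= k)%nat -> forall m : Z, INR k * a <> IZR m.

Lemma irrational_dist_lower_bound a : irrational a ->
  forall N, exists d, 0 < d /\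
    forall k, (1 <= k <= N)%nat -> forall m, d <= Rabs (INR k * a - IZR m).
Proof.
  intros Ha N. induction N as [|N [d [Hd H]]].
  - exists 1. split; [lra|]. intros; lia.
  - assert (Hp : 0 < dist_int (INR (S N) * a)).
    { apply dist_int_pos. intros k. apply Ha. lia. }
    exists (Rmin d (dist_int (INR (S N) * a))). split; [apply Rmin_glb_lt; lra|].
    intros k Hk m. destruct (Nat.eq_dec k (S N)) as [->|Hne].
    + eapply Rle_trans; [apply Rmin_r|]. apply dist_int_le.
    + eapply Rle_trans; [apply Rmin_l|]. apply H. lia.
Qed.

(* The least denominator in Dirichlet's theorem is coprime to its numerator,
   since dividing both by their gcd would give a smaller one. *)
Lemma dirichlet_coprime (a : R) (Q : nat) : (1 <= Q)%nat ->
  exists (q : nat) (p : Z), (1 <= q <= Q)%nat /\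
    Rabs (INR q * a - IZR p) < / INR Q /\ Z.gcd p (Z.of_nat q) = 1%Z.
Proof.
  intros HQ.
  set (P := fun q => (1 <= q <= Q)%nat /\ exists p : Z, Rabs (INR q * a - IZR p) < / INR Q).
  destruct (dec_inh_nat_subset_has_unique_least_element P (fun n => classic (P n))
              (dirichlet a Q HQ))
    as [q [[[Hq [p Hp]] Hleast] _]].
  exists q, p. split; [exact Hq|]. split; [exact Hp|].
  set (qZ := Z.of_nat q) in *.
  pose proof (Z.gcd_nonneg p qZ) as Hg0.
  destruct (Z.gcd_divide_r p qZ) as [c Hc]. destruct (Z.gcd_divide_l p qZ) as [e He].
  set (g := Z.gcd p qZ) in *.
  assert (g <> 0)%Z by (intro E; rewrite E in Hc; lia).
  destruct (Z.eq_dec g 1) as [|Hne]; auto. exfalso.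
  assert (Hc1 : (1 <= c)%Z) by nia.
  assert (Hcq : (c < qZ)%Z) by nia.
  enough (HP : P (Z.to_nat c)) by (specialize (Hleast _ HP); lia).
  split; [lia|]. exists e.
  assert (E : INR q * a - IZR p = IZR g * (INR (Z.to_nat c) * a - IZR e)).
  { rewrite INR_Z_to_nat, INR_IZR_INZ by lia. fold qZ. rewrite Hc, He, !mult_IZR. ring. }
  rewrite E, Rabs_mult in Hp.
  assert (1 < IZR g) by (apply IZR_lt; lia).
  rewrite Rabs_right in Hp by lra.
  pose proof (Rabs_pos (INR (Z.to_nat c) * a - IZR e)). nra.
Qed.

(* Choose [0 <= r < q] with [r p = j (mod q)], where [j] is the integer nearest to
   [q (b - (N+1) a)]; then [n = N + 1 + r] satisfies
   [q (n a - b - m) = r (q a - p) + (j - q (b - (N+1) a))]. *)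
Lemma shifted_approximation (a b : R) (q : nat) (p : Z) (N : nat) :
  (1 <= q)%nat -> Z.gcd p (Z.of_nat q) = 1%Z -> INR q * Rabs (INR q * a - IZR p) <= 1 ->
  exists n : nat, (N < n <= N + q)%nat /\
    exists m : Z, Rabs (INR n * a - b - IZR m) <= 3 / (2 * INR q).
Proof.
  intros Hq Hg Happrox.
  set (qZ := Z.of_nat q) in *.
  assert (Hb : Bezout p qZ 1) by (apply Zis_gcd_bezout; rewrite <- Hg; apply Zgcd_is_gcd).
  destruct Hb as [u v Huv].
  set (b1 := b - INR (S N) * a).
  set (j := Int_part (INR q * b1 + / 2)).
  assert (Hj : Rabs (IZR j - INR q * b1) <= / 2).
  { destruct (Int_part_bounds (INR q * b1 + / 2)). fold j in H, H0. apply Rabs_le; lra. }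
  set (D := (j * u / qZ)%Z).
  set (r := ((j * u) mod qZ)%Z).
  assert (Hr : r = (j * u - qZ * D)%Z) by (apply Z.mod_eq; lia).
  assert (Hrb : (0 <= r < qZ)%Z) by (apply Z.mod_pos_bound; lia).
  set (M := (- (j * v) - D * p)%Z).
  assert (HM : IZR r * IZR p = IZR j + IZR qZ * IZR M).
  { rewrite <- !mult_IZR, <- plus_IZR. f_equal. rewrite Hr. unfold M.
    replace ((j * u - qZ * D) * p)%Z with (j * (u * p + v * qZ) - j * v * qZ - qZ * D * p)%Z
      by ring.
    rewrite Huv. ring. }
  exists (Z.to_nat r + S N)%nat. split; [lia|]. exists M.
  assert (Hn' : INR (Z.to_nat r) = IZR r) by (apply INR_Z_to_nat; lia).
  assert (HqR : INR q = IZR qZ) by apply INR_IZR_INZ.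
  assert (HqposR : 0 < INR q) by (apply lt_0_INR; lia).
  assert (E : INR (Z.to_nat r + S N) * a - b - IZR M
              = (INR (Z.to_nat r) * (INR q * a - IZR p) + (IZR j - INR q * b1)) / INR q).
  { rewrite plus_INR. unfold b1. field_simplify_eq; [|lra]. rewrite Hn', HqR, HM. ring. }
  rewrite E. unfold Rdiv.
  rewrite Rabs_mult, (Rabs_right (/ INR q)) by (apply Rle_ge, Rlt_le, Rinv_0_lt_compat; lra).
  assert (Hrq : INR (Z.to_nat r) <= INR q) by (rewrite Hn', HqR; apply IZR_le; lia).
  assert (Hnum : Rabs (INR (Z.to_nat r) * (INR q * a - IZR p) + (IZR j - INR q * b1)) <= 3 / 2).
  { eapply Rle_trans; [apply Rabs_triang|].
    rewrite Rabs_mult, (Rabs_right (INR (Z.to_nat r))) by (apply Rle_ge, pos_INR).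
    pose proof (pos_INR (Z.to_nat r)). pose proof (Rabs_pos (INR q * a - IZR p)). nra. }
  replace (3 * / (2 * INR q)) with (3 / 2 * / INR q) by (field; lra).
  apply Rmult_le_compat_r; [apply Rlt_le, Rinv_0_lt_compat; lra | exact Hnum].
Qed.

Lemma inhomogeneous_approximation (a b : R) : irrational a ->
  forall N : nat, exists n : nat, (N < n)%nat /\
    exists m : Z, Rabs (INR n * a - b - IZR m) <= 3 / INR n.
Proof.
  intros Ha N.
  destruct (irrational_dist_lower_bound a Ha N) as [d [Hd Hdk]].
  set (Q := S (Z.to_nat (up (/ d)))).
  assert (HQpos : 0 < INR Q) by (apply lt_0_INR; lia).
  assert (HQd : / INR Q < d).
  { assert (Hd' : 0 < / d) by (apply Rinv_0_lt_compat; lra).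
    assert (/ d < INR Q) by (pose proof (lt_INR_up _ Hd'); unfold Q; rewrite S_INR; lra).
    rewrite <- (Rinv_inv d). apply Rinv_lt_contravar; [apply Rmult_lt_0_compat|]; lra. }
  destruct (dirichlet_coprime a Q ltac:(lia)) as [q [p [Hq [Hp Hg]]]].
  assert (HqN : (N < q)%nat).
  { destruct (Nat.lt_ge_cases N q) as [|Hle]; auto.
    exfalso. specialize (Hdk q ltac:(lia) p). lra. }
  assert (Hqpos : 0 < INR q) by (apply lt_0_INR; lia).
  assert (Happrox : INR q * Rabs (INR q * a - IZR p) <= 1).
  { assert (INR q <= INR Q) by (apply le_INR; lia).
    apply Rle_trans with (INR Q * / INR Q); [|rewrite Rinv_r; lra].
    apply Rmult_le_compat; try lra; apply Rabs_pos. }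
  destruct (shifted_approximation a b q p N ltac:(lia) Hg Happrox) as [n [Hn [m Hm]]].
  exists n. split; [lia|]. exists m.
  assert (Hn2 : INR n < 2 * INR q) by (replace 2 with (INR 2) by reflexivity;
    rewrite <- mult_INR; apply lt_INR; lia).
  assert (0 < INR n) by (apply lt_0_INR; lia).
  eapply Rle_trans; [exact Hm|].
  apply Rmult_le_compat_l; [lra|]. apply Rlt_le, Rinv_lt_contravar; nra.
Qed.

(* [Ztheta x y z] stands for [x + y θ + z θ²] in [Z[θ]], with [θ³ = p θ + q]. *)
Record ztheta := Ztheta { zc0 : Z; zc1 : Z; zc2 : Z }.

Section CubicRing.
Variables p q : Z.

Definition zmul (e f : ztheta) : ztheta :=
  let (x1, y1, z1) := e in let (x2, y2, z2) := f in
  let c3 := (y1 * z2 + z1 * y2)%Z in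
  let c4 := (z1 * z2)%Z in
  Ztheta (x1 * x2 + q * c3) (x1 * y2 + y1 * x2 + p * c3 + q * c4)
        (x1 * z2 + y1 * y2 + z1 * x2 + p * c4).

Fixpoint zpow (e : ztheta) (n : nat) : ztheta :=
  match n with O => Ztheta 1 0 0 | S n => zmul (zpow e n) e end.

Definition zadd (e f : ztheta) : ztheta := Ztheta (zc0 e + zc0 f) (zc1 e + zc1 f) (zc2 e + zc2 f).

Definition zscale (n : Z) (e : ztheta) : ztheta := Ztheta (n * zc0 e) (n * zc1 e) (n * zc2 e).

(* The product of the two conjugates of [e]: [e * zadj e = znorm e]. *)
Definition zadj (e : ztheta) : ztheta :=
  let (x, y, z) := e in
  Ztheta ((x + p * z) * (x + p * z) - q * y * z - p * y * y) (q * z * z - x * y)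
        (y * y - x * z - p * z * z).

Definition znorm (e : ztheta) : Z :=
  let (x, y, z) := e in
  (x * ((x + p * z) * (x + p * z) - q * y * z - p * y * y) + q * z * (q * z * z - x * y)
   + q * y * (y * y - x * z - p * z * z))%Z.

Definition ztrace (e : ztheta) : Z := (3 * zc0 e + 2 * p * zc2 e)%Z.

Lemma zmul_zadj e : zmul e (zadj e) = Ztheta (znorm e) 0 0.
Proof. destruct e as [x y z]; unfold zmul, zadj, znorm; f_equal; ring. Qed.

Lemma zmul_zadj_congr e d :
  zmul (zadd e (zscale (znorm e) d)) (zadj e)
  = zscale (znorm e) (zadd (Ztheta 1 0 0) (zmul d (zadj e))).
Proof.
  destruct e as [x y z], d as [a b c]; unfold zadd, zscale.
  cbn [zmul zadj znorm zc0 zc1 zc2]; f_equal; ring.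
Qed.

End CubicRing.

Ltac push_IZR := repeat rewrite ?plus_IZR, ?mult_IZR, ?minus_IZR, ?opp_IZR.
Ltac ztheta_simpl := cbn [zmul znorm ztrace zc0 zc1 zc2]; push_IZR.

Section Embeddings.
Variables (p q : Z) (th v : R).

Definition real_emb (e : ztheta) : R := IZR (zc0 e) + IZR (zc1 e) * th + IZR (zc2 e) * th ^ 2.

(* The complex embedding [θ ↦ -θ/2 + i v]; under [p = 3θ²/4 - v²] and [q = θ³ - p θ]
   the numbers [-θ/2 ± i v] are the other two roots of [x³ - p x - q]. *)
Definition cplx_re (e : ztheta) : R :=
  IZR (zc0 e) + IZR (zc1 e) * (- th / 2) + IZR (zc2 e) * (th ^ 2 / 4 - v ^ 2).
Definition cplx_im (e : ztheta) : R := IZR (zc1 e) * v + IZR (zc2 e) * (- th * v).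
Definition cplx_abs2 (e : ztheta) : R := cplx_re e ^ 2 + cplx_im e ^ 2.

Hypothesis Hq : IZR q = th ^ 3 - IZR p * th.
Hypothesis Hp : IZR p = 3 * th ^ 2 / 4 - v ^ 2.

Lemma real_emb_zmul e f : real_emb (zmul p q e f) = real_emb e * real_emb f.
Proof.
  destruct e as [x1 y1 z1], f as [x2 y2 z2]; unfold real_emb.
  ztheta_simpl; rewrite Hq; ring.
Qed.

Lemma cplx_re_zmul e f :
  cplx_re (zmul p q e f) = cplx_re e * cplx_re f - cplx_im e * cplx_im f.
Proof.
  destruct e as [x1 y1 z1], f as [x2 y2 z2]; unfold cplx_re, cplx_im.
  ztheta_simpl; rewrite Hq, Hp; field.
Qed.

Lemma cplx_im_zmul e f :
  cplx_im (zmul p q e f) = cplx_re e * cplx_im f + cplx_im e * cplx_re f.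
Proof.
  destruct e as [x1 y1 z1], f as [x2 y2 z2]; unfold cplx_re, cplx_im.
  ztheta_simpl; rewrite Hq, Hp; field.
Qed.

Lemma cplx_abs2_zmul e f : cplx_abs2 (zmul p q e f) = cplx_abs2 e * cplx_abs2 f.
Proof. unfold cplx_abs2. rewrite cplx_re_zmul, cplx_im_zmul. ring. Qed.

Lemma znorm_eq e : IZR (znorm p q e) = real_emb e * cplx_abs2 e.
Proof.
  destruct e as [x y z]; unfold cplx_abs2, real_emb, cplx_re, cplx_im.
  ztheta_simpl; rewrite Hq, Hp; field.
Qed.

Lemma ztrace_eq e : IZR (ztrace p e) = real_emb e + 2 * cplx_re e.
Proof.
  destruct e as [x y z]; unfold ztrace, real_emb, cplx_re.
  ztheta_simpl; rewrite Hp; field.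
Qed.

Lemma ztrace_mul_theta e :
  IZR (ztrace p (zmul p q e (Ztheta 0 1 0))) - th * IZR (ztrace p e)
  = 2 * (cplx_re e * (- 3 * th / 2) - cplx_im e * v).
Proof.
  destruct e as [x y z]; unfold ztrace, cplx_re, cplx_im.
  ztheta_simpl; rewrite Hq, Hp; field.
Qed.

Lemma ztrace_mul_theta2 e :
  IZR (ztrace p (zmul p q e (Ztheta 0 0 1))) - th ^ 2 * IZR (ztrace p e)
  = 2 * (cplx_re e * (- 3 * th ^ 2 / 4 - v ^ 2) - cplx_im e * (- th * v)).
Proof.
  destruct e as [x y z]; unfold ztrace, cplx_re, cplx_im.
  ztheta_simpl; rewrite Hq, Hp; field.
Qed.

Lemma real_emb_zpow e n : real_emb (zpow p q e n) = real_emb e ^ n.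
Proof.
  induction n; simpl; [unfold real_emb; simpl; ring|].
  rewrite real_emb_zmul, IHn. ring.
Qed.

Lemma cplx_abs2_zpow e n : cplx_abs2 (zpow p q e n) = cplx_abs2 e ^ n.
Proof.
  induction n; simpl; [unfold cplx_abs2, cplx_re, cplx_im; simpl; ring|].
  rewrite cplx_abs2_zmul, IHn. ring.
Qed.

Lemma cplx_zpow_polar e r phi :
  cplx_re e = r * cos phi -> cplx_im e = r * sin phi ->
  forall n, cplx_re (zpow p q e n) = r ^ n * cos (INR n * phi)
         /\ cplx_im (zpow p q e n) = r ^ n * sin (INR n * phi).
Proof.
  intros Hre Him n. induction n as [|n [IH1 IH2]].
  - rewrite Rmult_0_l, cos_0, sin_0. unfold cplx_re, cplx_im; simpl. split; ring.
  - simpl zpow. rewrite cplx_re_zmul, cplx_im_zmul, IH1, IH2, Hre, Him, S_INR.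
    replace ((INR n + 1) * phi) with (INR n * phi + phi) by ring.
    rewrite cos_plus, sin_plus. simpl. split; ring.
Qed.

Lemma real_emb_zscale n e : real_emb (zscale n e) = IZR n * real_emb e.
Proof. unfold real_emb, zscale; ztheta_simpl; ring. Qed.

Lemma cplx_abs2_zscale n e : cplx_abs2 (zscale n e) = IZR n ^ 2 * cplx_abs2 e.
Proof.
  unfold cplx_abs2, cplx_re, cplx_im, zscale.
  ztheta_simpl; ring.
Qed.

Lemma real_emb_const n : real_emb (Ztheta n 0 0) = IZR n.
Proof. unfold real_emb; simpl; ring. Qed.

Lemma cplx_abs2_const n : cplx_abs2 (Ztheta n 0 0) = IZR n ^ 2.
Proof. unfold cplx_abs2, cplx_re, cplx_im; simpl; ring. Qed.

End Embeddings.

Definition nonconstant (e : ztheta) : Prop := (zc1 e <> 0 \/ zc2 e <> 0)%Z.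

Section Nonvanishing.
Variables (p q : Z) (th v : R).
Hypothesis Hnr : no_rational_root p q.
Hypothesis Hq : IZR q = th ^ 3 - IZR p * th.

Lemma root_not_rational m n : n <> 0%Z -> th <> IZR m / IZR n.
Proof. intros Hn E. apply (Hnr m n Hn). rewrite <- E. lra. Qed.

(* If [x + y θ + z θ² = 0] with [z <> 0], eliminating [θ²] with the help of the cubic
   gives a linear relation [K θ = z² q - x y] over [Z]. *)
Lemma real_emb_neq0 e : nonconstant e -> real_emb th e <> 0.
Proof.
  intros Hyz E. destruct e as [x y z]. unfold nonconstant, real_emb in *. cbn [zc0 zc1 zc2] in *.
  destruct (Z.eq_dec z 0) as [Hz|Hz].
  - subst z. assert (Hy : y <> 0%Z) by (destruct Hyz; [auto|lia]).
    apply (root_not_rational (- x) y Hy). rewrite opp_IZR.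
    apply not_0_IZR in Hy. field_simplify_eq; [simpl in E; lra | exact Hy].
  - set (K := (y * y - z * z * p - x * z)%Z).
    assert (Id : IZR K * th - (IZR z * IZR z * IZR q - IZR x * IZR y) =
      (IZR y - IZR z * th) * (IZR x + IZR y * th + IZR z * th ^ 2)
      + IZR z * IZR z * (th ^ 3 - IZR p * th - IZR q)).
    { unfold K. push_IZR. ring. }
    rewrite E in Id. replace (th ^ 3 - IZR p * th - IZR q) with 0 in Id by lra.
    destruct (Z.eq_dec K 0) as [HK|HK].
    + rewrite HK in Id.
      assert (Hxy : (z * z * q - x * y = 0)%Z) by (apply eq_IZR; push_IZR; simpl in Id |- *; lra).
      apply (Hnr y z Hz).
      assert (Hnum : (y * y * y - p * y * (z * z) - q * (z * z * z) = 0)%Z).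
      { replace (y * y * y - p * y * (z * z) - q * (z * z * z))%Z
          with (y * K - z * (z * z * q - x * y))%Z by (unfold K; ring).
        rewrite HK, Hxy. ring. }
      apply (f_equal IZR) in Hnum. revert Hnum. push_IZR. intros Hnum.
      apply not_0_IZR in Hz. field_simplify_eq; auto. simpl in Hnum. nra.
    + apply (root_not_rational (z * z * q - x * y) K HK).
      apply not_0_IZR in HK. field_simplify_eq; auto. push_IZR. simpl in Id. lra.
Qed.

Hypothesis Hv : v <> 0.

Lemma cplx_im_eq0 e : cplx_im th v e = 0 -> zc1 e = 0%Z /\ zc2 e = 0%Z.
Proof.
  intros E. destruct e as [x y z]. unfold cplx_im in E. cbn [zc0 zc1 zc2] in *.
  assert (E' : IZR y = IZR z * th) by (apply (Rmult_eq_reg_r v); auto; lra).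
  destruct (Z.eq_dec z 0) as [Hz|Hz].
  - subst z. rewrite Rmult_0_l in E'. apply eq_IZR in E'. auto.
  - exfalso. apply (root_not_rational y z Hz). apply not_0_IZR in Hz.
    rewrite E'. field. auto.
Qed.

End Nonvanishing.

Lemma div_succ_le (H k : nat) : (k <= H * H)%nat -> (k / S H <= H)%nat.
Proof. intros Hk. apply Nat.lt_succ_r, Nat.Div0.div_lt_upper_bound. nia. Qed.

(* Pigeonhole over the [(H+1)^2] values [a θ + b θ²], [0 <= a, b <= H], modulo 1. *)
Lemma small_real_emb th (H : nat) : (1 <= H)%nat ->
  exists e, nonconstant e /\ Rabs (IZR (zc1 e)) <= INR H /\ Rabs (IZR (zc2 e)) <= INR H /\
    Rabs (real_emb th e) < / (INR H * INR H).
Proof.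
  intros HH.
  set (g := fun k => INR (k / S H) * th + INR (k mod S H) * th ^ 2).
  destruct (pigeonhole_frac g (H * H)) as [i [j [Hij Hb]]]; [nia|].
  set (y := (Z.of_nat (j / S H) - Z.of_nat (i / S H))%Z).
  set (z := (Z.of_nat (j mod S H) - Z.of_nat (i mod S H))%Z).
  exists (Ztheta (- (Int_part (g j) - Int_part (g i))) y z).
  assert (Hcoord : forall a b : nat, (a <= H)%nat -> (b <= H)%nat ->
                     Rabs (IZR (Z.of_nat a - Z.of_nat b)) <= INR H).
  { intros a b Ha Hb'. rewrite minus_IZR, <- !INR_IZR_INZ.
    apply le_INR in Ha. apply le_INR in Hb'. pose proof (pos_INR a). pose proof (pos_INR b).
    apply Rabs_le; lra. }
  assert (Hmod : forall k, (k mod S H <= H)%nat)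
    by (intros k; pose proof (Nat.mod_upper_bound k (S H)); lia).
  cbn [zc0 zc1 zc2]. split; [|split; [|split]].
  - unfold nonconstant. cbn [zc1 zc2].
    destruct (Z.eq_dec y 0) as [Ey|Ey]; [|left; auto].
    destruct (Z.eq_dec z 0) as [Ez|Ez]; [|right; auto].
    exfalso. unfold y, z in *.
    assert (j / S H = i / S H)%nat by lia. assert (j mod S H = i mod S H)%nat by lia.
    rewrite (Nat.div_mod_eq j (S H)), (Nat.div_mod_eq i (S H)) in Hij. lia.
  - apply Hcoord; apply div_succ_le; lia.
  - apply Hcoord; apply Hmod.
  - unfold real_emb. cbn [zc0 zc1 zc2]. rewrite <- mult_INR.
    replace (IZR (- (Int_part (g j) - Int_part (g i))) + IZR y * th + IZR z * th ^ 2)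
      with (g j - g i - IZR (Int_part (g j) - Int_part (g i))); [exact Hb|].
    unfold g, y, z. rewrite !minus_IZR, opp_IZR, minus_IZR, <- !INR_IZR_INZ. ring.
Qed.

(* [x] is controlled by [y], [z] and [x + y θ + z θ²], and so are both embeddings. *)
Lemma cplx_abs2_bound th v : exists C, 0 < C /\ forall (H : nat) e, 1 <= INR H ->
  Rabs (IZR (zc1 e)) <= INR H -> Rabs (IZR (zc2 e)) <= INR H -> Rabs (real_emb th e) <= 1 ->
  cplx_abs2 th v e <= C * (INR H * INR H).
Proof.
  set (c1 := 1 + Rabs th + th ^ 2 + Rabs th / 2 + Rabs (th ^ 2 / 4 - v ^ 2)).
  set (c2 := Rabs v + Rabs (- th * v)).
  exists ((c1 + c2) ^ 2 + 1). split; [pose proof (pow2_ge_0 (c1 + c2)); lra|].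
  intros H [x y z] HR Hy Hz Hev. unfold real_emb, cplx_abs2, cplx_re, cplx_im in *.
  cbn [zc0 zc1 zc2] in *.
  pose proof (Rabs_pos th). pose proof (pow2_ge_0 th).
  assert (Hx : Rabs (IZR x) <= INR H * (1 + Rabs th + th ^ 2)).
  { replace (IZR x) with ((IZR x + IZR y * th + IZR z * th ^ 2) - IZR y * th - IZR z * th ^ 2)
      by ring.
    eapply Rle_trans; [apply Rabs_triang|].
    eapply Rle_trans; [apply Rplus_le_compat_r, Rabs_triang|].
    rewrite !Rabs_Ropp, !Rabs_mult, (Rabs_right (th ^ 2)) by (apply Rle_ge, pow2_ge_0).
    assert (Rabs (IZR y) * Rabs th <= INR H * Rabs th) by (apply Rmult_le_compat_r; lra).
    assert (Rabs (IZR z) * th ^ 2 <= INR H * th ^ 2) by (apply Rmult_le_compat_r; lra).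
    nra. }
  assert (Her : Rabs (IZR x + IZR y * (- th / 2) + IZR z * (th ^ 2 / 4 - v ^ 2)) <= INR H * c1).
  { assert (A1 : Rabs (IZR y * (- th / 2)) <= INR H * (Rabs th / 2)).
    { rewrite Rabs_mult. apply Rmult_le_compat; try apply Rabs_pos; auto.
      unfold Rdiv. rewrite Rabs_mult, Rabs_Ropp, Rabs_inv, (Rabs_right 2) by lra. lra. }
    assert (A2 : Rabs (IZR z * (th ^ 2 / 4 - v ^ 2)) <= INR H * Rabs (th ^ 2 / 4 - v ^ 2)).
    { rewrite Rabs_mult. apply Rmult_le_compat_r; [apply Rabs_pos|auto]. }
    eapply Rle_trans; [apply Rabs_triang|].
    eapply Rle_trans; [apply Rplus_le_compat_r, Rabs_triang|].
    unfold c1. lra. }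
  assert (Hei : Rabs (IZR y * v + IZR z * (- th * v)) <= INR H * c2).
  { assert (Rabs (IZR y * v) <= INR H * Rabs v)
      by (rewrite Rabs_mult; apply Rmult_le_compat_r; [apply Rabs_pos|auto]).
    assert (Rabs (IZR z * (- th * v)) <= INR H * Rabs (- th * v))
      by (rewrite Rabs_mult; apply Rmult_le_compat_r; [apply Rabs_pos|auto]).
    eapply Rle_trans; [apply Rabs_triang|]. unfold c2. lra. }
  assert (0 <= c1) by (unfold c1; pose proof (Rabs_pos (th ^ 2 / 4 - v ^ 2)); lra).
  assert (0 <= c2) by (unfold c2; pose proof (Rabs_pos v); pose proof (Rabs_pos (- th * v)); lra).
  rewrite <- (pow2_abs (IZR x + _ + _)), <- (pow2_abs (IZR y * v + _)).
  match goal with |- ?a ^ 2 + ?b ^ 2 <= _ =>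
    assert (a ^ 2 <= (INR H * c1) ^ 2) by (apply pow_incr; split; [apply Rabs_pos | lra]);
    assert (b ^ 2 <= (INR H * c2) ^ 2) by (apply pow_incr; split; [apply Rabs_pos | lra]) end.
  assert (0 <= c1 * c2 * (INR H * INR H)) by (apply Rmult_le_pos; nra).
  assert (0 <= INR H * INR H) by nra.
  nra.
Qed.

Lemma decreasing_sequence {A : Type} (P : A -> Prop) (f : A -> R) :
  (forall r, 0 < r -> exists x, P x /\ 0 < f x < r) ->
  exists u : nat -> A, forall k, P (u k) /\ 0 < f (u k) /\
    forall j, (k < j)%nat -> f (u j) < f (u k).
Proof.
  intros Hex. destruct (Hex 1 Rlt_0_1) as [x0 _].
  set (next := fun r => epsilon (inhabits x0) (fun x => P x /\ 0 < f x < r)).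
  assert (Hnext : forall r, 0 < r -> P (next r) /\ 0 < f (next r) < r)
    by (intros r Hr; apply epsilon_spec, Hex, Hr).
  set (u := fix u k := match k with O => next 1 | S k => next (f (u k)) end).
  assert (Hu : forall k, P (u k) /\ 0 < f (u k) /\ f (u (S k)) < f (u k)).
  { assert (Hpos : forall k, P (u k) /\ 0 < f (u k)).
    { induction k as [|k [_ IH]]; [destruct (Hnext 1 Rlt_0_1)|destruct (Hnext _ IH)]; tauto. }
    intros k. destruct (Hpos k) as [HP Hf]. destruct (Hnext _ Hf). tauto. }
  exists u. intros k. destruct (Hu k) as [HP [Hf _]]. split; [exact HP|]. split; [exact Hf|].
  induction 1 as [|j _ IH]; [apply Hu|]. eapply Rlt_trans; [apply Hu|exact IH].
Qed.

Definition small_norm (p q : Z) (K : nat) (e : ztheta) : Prop :=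
  nonconstant e /\ znorm p q e <> 0%Z /\ (Z.abs (znorm p q e) < Z.of_nat K)%Z.

Definition zrange (lo : Z) (n : nat) : list Z := map (fun k => lo + Z.of_nat k)%Z (seq 0 n).

Lemma in_zrange lo n z : (lo <= z < lo + Z.of_nat n)%Z -> In z (zrange lo n).
Proof.
  intros Hz. apply in_map_iff. exists (Z.to_nat (z - lo)).
  split; [lia|]. apply in_seq. lia.
Qed.

Definition residue_class (p q : Z) (e : ztheta) : Z * Z * Z * Z :=
  let N := znorm p q e in (N, (zc0 e mod Z.abs N)%Z, (zc1 e mod Z.abs N)%Z, (zc2 e mod Z.abs N)%Z).

Definition residue_classes (K : nat) : list (Z * Z * Z * Z) :=
  list_prod (list_prod (list_prod (zrange (- Z.of_nat K) (2 * K + 1)) (zrange 0 K))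
                       (zrange 0 K)) (zrange 0 K).

Lemma residue_class_in p q K e : small_norm p q K e -> In (residue_class p q e) (residue_classes K).
Proof.
  intros [_ [HN HK]]. unfold residue_class, residue_classes.
  assert (Hmod : forall a, (0 <= a mod Z.abs (znorm p q e) < 0 + Z.of_nat K)%Z).
  { intros a. pose proof (Z.mod_pos_bound a (Z.abs (znorm p q e)) ltac:(lia)). lia. }
  repeat (apply in_prod_iff; split); apply in_zrange; try apply Hmod. lia.
Qed.

Lemma eq_mod_abs a b N : N <> 0%Z -> (a mod Z.abs N = b mod Z.abs N)%Z ->
  exists d, a = (b + N * d)%Z.
Proof.
  intros HN E. exists (Z.sgn N * (a / Z.abs N - b / Z.abs N))%Z.
  pose proof (Z.div_mod a (Z.abs N) ltac:(lia)). pose proof (Z.div_mod b (Z.abs N) ltac:(lia)).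
  rewrite Z.mul_assoc, Z.sgn_abs. lia.
Qed.

Section Units.
Variables (p q : Z) (th v : R).
Hypothesis Hnr : no_rational_root p q.
Hypothesis Hq : IZR q = th ^ 3 - IZR p * th.
Hypothesis Hp : IZR p = 3 * th ^ 2 / 4 - v ^ 2.
Hypothesis Hv : v <> 0.

Lemma small_norm_elements :
  exists K : nat, forall r, 0 < r -> exists e, small_norm p q K e /\ 0 < Rabs (real_emb th e) < r.
Proof.
  destruct (cplx_abs2_bound th v) as [C [HC Habs2]].
  exists (Z.to_nat (up C)). intros r Hr.
  set (H := S (Z.to_nat (up (/ r)))).
  assert (HH : / r < INR H).
  { unfold H. rewrite S_INR. pose proof (lt_INR_up (/ r) (Rinv_0_lt_compat _ Hr)). lra. }
  assert (HR : 1 <= INR H) by (apply (le_INR 1); unfold H; lia).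
  assert (HHH : 1 <= INR H * INR H) by nra.
  destruct (small_real_emb th H ltac:(unfold H; lia)) as [e [Hyz [Hy [Hz Hsmall]]]].
  assert (Hsmall1 : Rabs (real_emb th e) <= 1).
  { apply Rlt_le. eapply Rlt_le_trans; [exact Hsmall|].
    rewrite <- Rinv_1. apply Rinv_le_contravar; lra. }
  specialize (Habs2 H e HR Hy Hz Hsmall1).
  exists e.
  assert (Hev : real_emb th e <> 0) by (apply (real_emb_neq0 p q); auto).
  assert (Hei : cplx_im th v e <> 0).
  { intros E. destruct (cplx_im_eq0 p q th v Hnr Hq Hv e E). destruct Hyz; auto. }
  assert (HSp : 0 < cplx_abs2 th v e).
  { unfold cplx_abs2. pose proof (pow2_ge_0 (cplx_re th v e)).
    assert (0 < cplx_im th v e ^ 2) by (simpl; rewrite Rmult_1_r; apply Rsqr_pos_lt; auto). lra. }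
  assert (HN := znorm_eq p q th v Hq Hp e).
  split; [split; [auto|split]|].
  - intros E. rewrite E in HN. symmetry in HN. apply Rmult_integral in HN. destruct HN; [auto|lra].
  - assert (Hb : Rabs (IZR (znorm p q e)) < C).
    { rewrite HN, Rabs_mult, (Rabs_right (cplx_abs2 th v e)) by lra.
      apply Rlt_le_trans with (/ (INR H * INR H) * cplx_abs2 th v e);
        [apply Rmult_lt_compat_r; lra|].
      apply Rle_trans with (/ (INR H * INR H) * (C * (INR H * INR H)));
        [apply Rmult_le_compat_l; [apply Rlt_le, Rinv_0_lt_compat|]; lra|].
      rewrite Rmult_comm, Rmult_assoc, Rinv_r by lra. lra. }
    rewrite <- abs_IZR in Hb. destruct (archimed C) as [A _].
    assert (Z.abs (znorm p q e) < up C)%Z by (apply lt_IZR; lra).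
    assert (0 <= up C)%Z by (apply le_IZR; simpl; lra). lia.
  - split; [apply Rabs_pos_lt; auto|].
    eapply Rlt_le_trans; [exact Hsmall|].
    apply Rle_trans with (/ INR H); [apply Rinv_le_contravar; nra|].
    rewrite <- (Rinv_inv r). apply Rlt_le, Rinv_lt_contravar; [|exact HH].
    apply Rmult_lt_0_compat; [apply Rinv_0_lt_compat|]; lra.
Qed.

(* If [e = f (mod N(f))] and [N(e) = N(f)], then [e / f = e * zadj f / N(f)] lies in [Z[θ]]
   and has norm 1. *)
Lemma congruent_quotient_unit e f d :
  znorm p q f <> 0%Z -> znorm p q e = znorm p q f -> e = zadd f (zscale (znorm p q f) d) ->
  let u := zadd (Ztheta 1 0 0) (zmul p q d (zadj p q f)) in
  real_emb th u = real_emb th e / real_emb th f /\ real_emb th u * cplx_abs2 th v u = 1.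
Proof.
  intros HN0 HNe He u. set (N := znorm p q f) in *.
  assert (Hw : zmul p q e (zadj p q f) = zscale N u) by (rewrite He; apply zmul_zadj_congr).
  assert (HNR : IZR N <> 0) by (apply not_0_IZR; auto).
  assert (He' := znorm_eq p q th v Hq Hp e). assert (Hf' := znorm_eq p q th v Hq Hp f).
  rewrite HNe in He'. fold N in Hf'.
  assert (Hf0 : real_emb th f <> 0) by (intros Z0; rewrite Z0 in Hf'; lra).
  assert (Hs0 : cplx_abs2 th v f <> 0) by (intros Z0; rewrite Z0 in Hf'; lra).
  assert (Hadj := f_equal (real_emb th) (zmul_zadj p q f)).
  assert (Hadj2 := f_equal (cplx_abs2 th v) (zmul_zadj p q f)).
  assert (Hw1 := f_equal (real_emb th) Hw). assert (Hw2 := f_equal (cplx_abs2 th v) Hw).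
  rewrite real_emb_zmul, real_emb_const in Hadj by exact Hq.
  rewrite cplx_abs2_zmul, cplx_abs2_const in Hadj2 by assumption.
  rewrite real_emb_zmul, real_emb_zscale in Hw1 by exact Hq.
  rewrite cplx_abs2_zmul, cplx_abs2_zscale in Hw2 by assumption.
  fold N in Hadj, Hadj2.
  assert (Eu : real_emb th u = real_emb th e / real_emb th f).
  { apply (Rmult_eq_reg_l (IZR N)); [|exact HNR]. rewrite <- Hw1, <- Hadj. field. auto. }
  assert (Su : cplx_abs2 th v u = cplx_abs2 th v e / cplx_abs2 th v f).
  { apply (Rmult_eq_reg_l (IZR N ^ 2)); [|apply pow_nonzero, HNR].
    rewrite <- Hw2, <- Hadj2. field. auto. }
  split; [exact Eu|]. rewrite Eu, Su.
  replace (real_emb th e / real_emb th f * (cplx_abs2 th v e / cplx_abs2 th v f))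
    with ((real_emb th e * cplx_abs2 th v e) / (real_emb th f * cplx_abs2 th v f)) by (field; auto).
  rewrite <- He', <- Hf'. field. exact HNR.
Qed.

(* Among infinitely many elements of bounded norm and decreasing size, two lie in the
   same residue class; their quotient is a unit of size [> 1] (squared if negative). *)
Lemma exists_unit : exists eps, 1 < real_emb th eps /\ real_emb th eps * cplx_abs2 th v eps = 1.
Proof.
  destruct small_norm_elements as [K HK].
  destruct (decreasing_sequence (small_norm p q K) (fun e => Rabs (real_emb th e)) HK)
    as [sq Hsq].
  destruct (pigeonhole_list (residue_classes K) (fun k => residue_class p q (sq k)))
    as [i [j [Hij E]]].
  { intros k _. apply residue_class_in, Hsq. }
  destruct (Hsq i) as [[_ [HNi _]] [Hai Hdec]]. specialize (Hdec j ltac:(lia)).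
  destruct (Hsq j) as [[_ [HNj _]] [Haj _]].
  unfold residue_class in E. injection E as EN Ex Ey Ez. rewrite EN in Ex, Ey, Ez.
  destruct (eq_mod_abs _ _ _ HNj Ex) as [dx Hdx].
  destruct (eq_mod_abs _ _ _ HNj Ey) as [dy Hdy].
  destruct (eq_mod_abs _ _ _ HNj Ez) as [dz Hdz].
  assert (Hei : sq i = zadd (sq j) (zscale (znorm p q (sq j)) (Ztheta dx dy dz))).
  { destruct (sq i) as [a b c]. unfold zadd, zscale. cbn [zc0 zc1 zc2] in *. f_equal; auto. }
  destruct (congruent_quotient_unit _ _ _ HNj EN Hei) as [Eu Hprod].
  set (u := zadd _ _) in Eu, Hprod.
  assert (Habs : 1 < Rabs (real_emb th u)).
  { rewrite Eu. unfold Rdiv. rewrite Rabs_mult, Rabs_inv.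
    apply (Rmult_lt_reg_r (Rabs (real_emb th (sq j)))); [lra|].
    rewrite Rmult_assoc, Rinv_l by lra. lra. }
  destruct (Rle_dec 0 (real_emb th u)) as [Hpos|Hneg].
  - exists u. rewrite Rabs_right in Habs by lra. auto.
  - exists (zmul p q u u). rewrite real_emb_zmul, cplx_abs2_zmul by assumption.
    rewrite Rabs_left in Habs by lra. split; nra.
Qed.

End Units.

Lemma Rabs_sin_le y : Rabs (sin y) <= Rabs y.
Proof.
  assert (G : forall x, 0 <= x -> Rabs (sin x) <= x).
  { intros x Hx. destruct (Req_dec x 0) as [->|Hx0]; [rewrite sin_0, Rabs_R0; lra|].
    pose proof (sin_lt_x x ltac:(lra)). pose proof (SIN_bound x).
    destruct (Rle_dec x 1).
    - assert (0 <= sin x) by (apply sin_ge_0; pose proof PI2_1; lra).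
      rewrite Rabs_right; lra.
    - apply Rabs_le; lra. }
  destruct (Rle_dec 0 y); [rewrite (Rabs_right y) by lra; now apply G|].
  rewrite (Rabs_left y) by lra.
  replace (sin y) with (- sin (- y)) by (rewrite sin_neg; ring).
  rewrite Rabs_Ropp. apply G; lra.
Qed.

Lemma polar_decomposition a b : 0 < a ^ 2 + b ^ 2 ->
  exists phi, a = sqrt (a ^ 2 + b ^ 2) * cos phi /\ b = sqrt (a ^ 2 + b ^ 2) * sin phi.
Proof.
  intros H. set (rho := sqrt (a ^ 2 + b ^ 2)).
  assert (Hr : 0 < rho) by (apply sqrt_lt_R0; auto).
  assert (Hr2 : rho * rho = a ^ 2 + b ^ 2) by (apply sqrt_sqrt; lra).
  set (c := a / rho).
  assert (Hc : -1 <= c <= 1).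
  { unfold c. assert (a * a <= rho * rho) by nra.
    split; apply (Rmult_le_reg_r rho); auto; field_simplify; try lra; nra. }
  assert (Hs : sqrt (1 - c²) = Rabs b / rho).
  { replace (1 - c²) with (Rsqr (b / rho)) by (unfold c, Rsqr; field_simplify_eq; try lra; nra).
    rewrite sqrt_Rsqr_abs. unfold Rdiv. rewrite Rabs_mult, Rabs_inv, (Rabs_right rho) by lra.
    reflexivity. }
  destruct (Rle_dec 0 b) as [Hb|Hb].
  - exists (acos c). rewrite cos_acos, sin_acos by auto. rewrite Hs, Rabs_right by lra.
    unfold c. split; field; lra.
  - exists (- acos c). rewrite cos_neg, sin_neg, cos_acos, sin_acos by auto.
    rewrite Hs, Rabs_left by lra. unfold c. split; field; lra.
Qed.

(* [x φ + c = π t + π/2 + m π] with [t = x (φ/π) - (1/2 - c/π) - m]. *)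
Lemma Rabs_cos_le_dist x c phi (m : Z) :
  Rabs (cos (x * phi + c)) <= PI * Rabs (x * (phi / PI) - (1 / 2 - c / PI) - IZR m).
Proof.
  pose proof PI_RGT_0.
  set (t := x * (phi / PI) - (1 / 2 - c / PI) - IZR m).
  assert (E : x * phi + c = PI * t + PI / 2 + IZR m * PI) by (unfold t; field; lra).
  rewrite E, cos_plus, (sin_eq_0_1 (IZR m * PI)) by eauto.
  rewrite cos_plus, cos_PI2, sin_PI2.
  replace ((cos (PI * t) * 0 - sin (PI * t) * 1) * cos (IZR m * PI) - sin (PI * t + PI / 2) * 0)
    with (- (sin (PI * t) * cos (IZR m * PI))) by ring.
  rewrite Rabs_Ropp, Rabs_mult.
  pose proof (Rabs_sin_le (PI * t)) as Hs. rewrite Rabs_mult, (Rabs_right PI) in Hs by lra.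
  assert (Rabs (cos (IZR m * PI)) <= 1) by (apply Rabs_le, COS_bound).
  pose proof (Rabs_pos (sin (PI * t))). pose proof (Rabs_pos (cos (IZR m * PI))). nra.
Qed.

Lemma increasing_enumeration (G : nat -> Prop) :
  (forall K, exists k, (K < k)%nat /\ G k) ->
  exists phi : nat -> nat, (forall i, (phi i < phi (S i))%nat) /\ forall i, G (phi i).
Proof.
  intros HG.
  set (next := fun K => epsilon (inhabits 0%nat) (fun k => (K < k)%nat /\ G k)).
  assert (Hnext : forall K, (K < next K)%nat /\ G (next K))
    by (intros K; apply epsilon_spec, HG).
  exists (fix phi i := match i with O => next O | S i => next (phi i) end).
  split; intros [|i]; apply Hnext.
Qed.

Lemma le_leq a b : (a <= b)%nat -> is_true (ssrnat.leq a b).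
Proof. intro H. exact (ssrbool.introT ssrnat.leP H). Qed.

Lemma peck_sequence_of_bounds (sigma tau : R) (s : nat -> nat) (A B : R) :
  (forall n, (2 <= s n)%nat) -> (forall n, (s n < s (S n))%nat) ->
  (forall n, Rmax (dist_int (INR (s n) * sigma)) (dist_int (INR (s n) * tau))
               * sqrt (INR (s n)) <= A) ->
  (forall K, exists n, (K < n)%nat /\
     dist_int (INR (s n) * sigma) * (sqrt (INR (s n)) * ln (INR (s n))) <= B) ->
  peck_sequence sigma tau s.
Proof.
  intros Hs2 Hinc HA HB.
  assert (Hpos : forall n, 0 < sqrt (INR (s n)) * ln (INR (s n))).
  { intros n. assert (2 <= INR (s n)) by (apply (le_INR 2), Hs2).
    apply Rmult_lt_0_compat; [apply sqrt_lt_R0; lra|].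
    rewrite <- ln_1. apply ln_increasing; lra. }
  assert (Hsqrt : forall n, 0 < sqrt (INR (s n))).
  { intros n. apply sqrt_lt_R0, (lt_INR 0). specialize (Hs2 n). lia. }
  assert (Hdiv : forall X Y M, 0 < Y -> X * Y <= M -> X < (Rabs M + 1) / Y).
  { intros X Y M HY H. apply (Rmult_lt_reg_r Y); [exact HY|].
    unfold Rdiv. rewrite Rmult_assoc, Rinv_l by lra. pose proof (Rle_abs M). lra. }
  destruct (increasing_enumeration _ HB) as [phi [Hphi HphiB]].
  split; [intros n; apply le_leq; specialize (Hs2 n); lia|].
  split; [intros n; apply le_leq, Hinc|].
  exists (Rabs A + 1), (Rabs B + 1).
  split; [pose proof (Rabs_pos A); lra|]. split; [pose proof (Rabs_pos B); lra|].
  split; [intros n; apply Hdiv, HA; apply Hsqrt|].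
  exists phi. split; [intros i; apply le_leq, Hphi|].
  intros i. split; [apply le_leq, Hs2|]. apply Hdiv; [apply Hpos|apply HphiB].
Qed.

(* If the quadratic cofactor [x² + θ x + θ² - p] had real roots, both would equal [θ],
   forcing [θ = 0], a rational root. *)
Lemma complex_roots_imag_pos p q th : no_rational_root p q ->
  th ^ 3 - IZR p * th - IZR q = 0 ->
  (forall x : R, x ^ 3 - IZR p * x - IZR q = 0 -> x = th) ->
  0 < 3 * th ^ 2 / 4 - IZR p.
Proof.
  intros Hnr Hroot Huniq.
  destruct (Rlt_le_dec 0 (3 * th ^ 2 / 4 - IZR p)) as [H|H]; auto. exfalso.
  set (d := sqrt (4 * IZR p - 3 * th ^ 2)).
  assert (Hd : d * d = 4 * IZR p - 3 * th ^ 2) by (apply sqrt_sqrt; lra).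
  assert (Hf : forall x, x ^ 2 + th * x + th ^ 2 - IZR p = 0 -> x = th).
  { intros x Hx. apply Huniq.
    replace (x ^ 3 - IZR p * x - IZR q) with
      ((x - th) * (x ^ 2 + th * x + th ^ 2 - IZR p) + (th ^ 3 - IZR p * th - IZR q)) by ring.
    rewrite Hx, Hroot. ring. }
  assert (E1 := Hf ((- th + d) / 2) ltac:(field_simplify; nra)).
  assert (E2 := Hf ((- th - d) / 2) ltac:(field_simplify; nra)).
  assert (Hth : th = 0) by lra.
  apply (Hnr 0%Z 1%Z ltac:(lia)). subst th.
  replace (IZR 0 / IZR 1) with 0 by (simpl; field). exact Hroot.
Qed.

Section UnitPowers.
Variables (p q : Z) (th v : R).
Hypothesis Hnr : no_rational_root p q.
Hypothesis Hq : IZR q = th ^ 3 - IZR p * th.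
Hypothesis Hp : IZR p = 3 * th ^ 2 / 4 - v ^ 2.
Hypothesis Hv : v <> 0.

Variables (eps : ztheta) (r phi : R).
Hypothesis Heps : 1 < real_emb th eps.
Hypothesis Hunit : real_emb th eps * cplx_abs2 th v eps = 1.
Hypothesis Hre : cplx_re th v eps = r * cos phi.
Hypothesis Him : cplx_im th v eps = r * sin phi.

(* Otherwise some power [eps^k] would be fixed by complex conjugation, hence rational,
   contradicting [eps^k > 1] and [eps^k |eps'^k|^2 = 1]. *)
Lemma phase_irrational : irrational (phi / PI).
Proof.
  intros k Hk m E.
  assert (Hk' : INR k * phi = IZR m * PI) by (rewrite <- E; field; pose proof PI_RGT_0; lra).
  destruct (cplx_zpow_polar p q th v Hq Hp eps r phi Hre Him k) as [Er Ei].
  assert (Hs : sin (INR k * phi) = 0) by (apply sin_eq_0_1; eauto).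
  rewrite Hs, Rmult_0_r in Ei.
  destruct (cplx_im_eq0 p q th v Hnr Hq Hv _ Ei) as [Hy Hz].
  set (w := zpow p q eps k) in *.
  assert (Ew : real_emb th w = cplx_re th v w) by (unfold real_emb, cplx_re; rewrite Hy, Hz; ring).
  assert (HP : real_emb th w * cplx_abs2 th v w = 1).
  { unfold w. rewrite real_emb_zpow, cplx_abs2_zpow, <- Rpow_mult_distr, Hunit by assumption.
    apply pow1. }
  assert (Hgt : 1 < real_emb th w)
    by (unfold w; rewrite real_emb_zpow by exact Hq; apply Rlt_pow_R1; auto).
  unfold cplx_abs2 in HP. rewrite Ei, <- Ew in HP. nra.
Qed.


Hypothesis Hr : 0 < r.
Variables (rho c : R).
Hypothesis Hrho : 0 <= rho.
Hypothesis Hrho_cos : - 3 * th / 2 = rho * cos c.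
Hypothesis Hrho_sin : v = rho * sin c.

Let lam := real_emb th eps.
Let trace_pow (n : nat) : Z := ztrace p (zpow p q eps n).
Let h := Rabs (- 3 * th ^ 2 / 4 - v ^ 2) + Rabs (- th * v).

Lemma r_sq_lam : r * r * lam = 1.
Proof.
  rewrite <- Hunit. unfold lam, cplx_abs2. rewrite Hre, Him.
  replace ((r * cos phi) ^ 2 + (r * sin phi) ^ 2) with (r * r * ((sin phi)² + (cos phi)²))
    by (unfold Rsqr; ring).
  rewrite sin2_cos2. ring.
Qed.

Lemma pow_r_bounds n : 0 < r ^ n <= 1.
Proof.
  assert (Hl : 1 < lam) by exact Heps.
  assert (r < 1).
  { pose proof r_sq_lam. destruct (Rlt_le_dec r 1) as [|Hr1]; [auto|].
    assert (1 <= r * r) by nra. nra. }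
  split; [apply pow_lt; auto|]. induction n; simpl; [lra|]. pose proof (pow_lt r n Hr). nra.
Qed.

Lemma pow_r_sq_lam n : r ^ n * r ^ n * lam ^ n = 1.
Proof. rewrite <- !Rpow_mult_distr, r_sq_lam. apply pow1. Qed.

Lemma trace_pow_eq n : IZR (trace_pow n) = lam ^ n + 2 * (r ^ n * cos (INR n * phi)).
Proof.
  unfold trace_pow, lam. rewrite (ztrace_eq p th v), (real_emb_zpow p q th) by assumption.
  destruct (cplx_zpow_polar p q th v Hq Hp eps r phi Hre Him n) as [-> _]. reflexivity.
Qed.

Lemma trace_pow_bounds n : lam ^ n - 2 <= IZR (trace_pow n) <= lam ^ n + 2.
Proof.
  rewrite trace_pow_eq. pose proof (COS_bound (INR n * phi)). destruct (pow_r_bounds n).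
  split; nra.
Qed.

(* [Tr(eps^n θ) - θ Tr(eps^n) = 2 Re (eps'^n (θ' - θ))] with [θ' - θ = ρ e^{ic}]. *)
Lemma dist_trace_theta n :
  dist_int (IZR (trace_pow n) * th) <= 2 * (r ^ n * rho) * Rabs (cos (INR n * phi + c)).
Proof.
  eapply Rle_trans;
    [apply (dist_int_le _ (ztrace p (zmul p q (zpow p q eps n) (Ztheta 0 1 0))))|].
  rewrite Rabs_minus_sym, Rmult_comm. unfold trace_pow.
  rewrite (ztrace_mul_theta p q th v) by assumption.
  destruct (cplx_zpow_polar p q th v Hq Hp eps r phi Hre Him n) as [-> ->].
  rewrite Hrho_cos, Hrho_sin.
  replace (r ^ n * cos (INR n * phi) * (rho * cos c) - r ^ n * sin (INR n * phi) * (rho * sin c))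
    with (r ^ n * rho * cos (INR n * phi + c)) by (rewrite cos_plus; ring).
  destruct (pow_r_bounds n).
  rewrite !Rabs_mult, (Rabs_right 2), (Rabs_right (r ^ n)), (Rabs_right rho); lra.
Qed.

Lemma dist_trace_theta2 n : dist_int (IZR (trace_pow n) * th ^ 2) <= 2 * (r ^ n * h).
Proof.
  eapply Rle_trans;
    [apply (dist_int_le _ (ztrace p (zmul p q (zpow p q eps n) (Ztheta 0 0 1))))|].
  rewrite Rabs_minus_sym, Rmult_comm. unfold trace_pow.
  rewrite (ztrace_mul_theta2 p q th v) by assumption.
  destruct (cplx_zpow_polar p q th v Hq Hp eps r phi Hre Him n) as [-> ->].
  destruct (pow_r_bounds n).
  rewrite Rabs_mult, (Rabs_right 2) by lra. apply Rmult_le_compat_l; [lra|].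
  unfold h. eapply Rle_trans; [apply Rabs_triang|]. rewrite Rabs_Ropp, !Rabs_mult.
  rewrite (Rabs_right (r ^ n)) by lra.
  assert (Rabs (cos (INR n * phi)) <= 1) by (apply Rabs_le, COS_bound).
  assert (Rabs (sin (INR n * phi)) <= 1) by (apply Rabs_le, SIN_bound).
  assert (0 <= r ^ n * ((1 - Rabs (cos (INR n * phi))) * Rabs (- 3 * th ^ 2 / 4 - v ^ 2)))
    by (apply Rmult_le_pos; [lra|apply Rmult_le_pos; [lra|apply Rabs_pos]]).
  assert (0 <= r ^ n * ((1 - Rabs (sin (INR n * phi))) * (Rabs (- th) * Rabs v)))
    by (apply Rmult_le_pos; [lra|apply Rmult_le_pos; [lra|apply Rmult_le_pos; apply Rabs_pos]]).
  nra.
Qed.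

Lemma pow_r_sqrt_trace n : 0 <= IZR (trace_pow n) -> r ^ n * sqrt (IZR (trace_pow n)) <= 2.
Proof.
  intros Hs0. pose proof (trace_pow_bounds n). pose proof (pow_r_sq_lam n).
  destruct (pow_r_bounds n).
  pose proof (sqrt_pos (IZR (trace_pow n))). pose proof (sqrt_sqrt _ Hs0).
  assert (r ^ n * r ^ n * IZR (trace_pow n) <= 3) by nra.
  nra.
Qed.

Lemma ln_trace_le n : (1 <= n)%nat -> 0 < IZR (trace_pow n) ->
  ln (IZR (trace_pow n)) <= INR n * (ln 3 + ln lam).
Proof.
  intros Hn Hs0. pose proof (trace_pow_bounds n).
  assert (Hl1 : 1 <= lam ^ n) by (apply pow_R1_Rle; unfold lam; lra).
  assert (Hln3 : 0 < ln 3) by (rewrite <- ln_1; apply ln_increasing; lra).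
  assert (HnR : 1 <= INR n) by (apply (le_INR 1); auto).
  apply Rle_trans with (ln (3 * lam ^ n)).
  - destruct (Req_dec (IZR (trace_pow n)) (3 * lam ^ n)) as [->|]; [lra|].
    apply Rlt_le, ln_increasing; lra.
  - rewrite ln_mult, ln_pow by (try apply pow_lt; unfold lam; lra).
    assert (ln 3 <= INR n * ln 3) by nra. lra.
Qed.

Lemma trace_pow_eventually : exists N0, forall n, (N0 <= n)%nat ->
  2 < IZR (trace_pow n) /\ IZR (trace_pow n) < IZR (trace_pow (S n)).
Proof.
  assert (Hl : 1 < lam) by exact Heps.
  destruct (Pow_x_infinity lam ltac:(rewrite Rabs_right; lra) (4 / (lam - 1) + 4)) as [N0 HN0].
  exists N0. intros n Hn. specialize (HN0 n Hn).
  rewrite Rabs_right in HN0 by (apply Rle_ge, pow_le; lra).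
  assert (H4 : 0 < 4 / (lam - 1)) by (apply Rdiv_lt_0_compat; lra).
  assert (Hstep : 4 < lam ^ n * (lam - 1)).
  { assert (4 / (lam - 1) * (lam - 1) = 4) by (field; lra). nra. }
  pose proof (trace_pow_bounds n). pose proof (trace_pow_bounds (S n)). simpl in *. nra.
Qed.


Lemma trace_dist_sqrt_bound n : 2 < IZR (trace_pow n) ->
  Rmax (dist_int (IZR (trace_pow n) * th)) (dist_int (IZR (trace_pow n) * th ^ 2))
    * sqrt (IZR (trace_pow n)) <= 4 * (rho + h).
Proof.
  intros Hs2.
  pose proof (pow_r_sqrt_trace n ltac:(lra)). destruct (pow_r_bounds n).
  pose proof (sqrt_pos (IZR (trace_pow n))).
  assert (Hcos : Rabs (cos (INR n * phi + c)) <= 1) by (apply Rabs_le, COS_bound).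
  pose proof (dist_trace_theta n). pose proof (dist_trace_theta2 n).
  assert (Hh : 0 <= h) by (unfold h; pose proof (Rabs_pos (- 3 * th ^ 2 / 4 - v ^ 2));
                           pose proof (Rabs_pos (- th * v)); lra).
  apply Rle_trans with (2 * (r ^ n * (rho + h)) * sqrt (IZR (trace_pow n))).
  - assert (0 <= r ^ n * rho * (1 - Rabs (cos (INR n * phi + c))))
      by (apply Rmult_le_pos; [apply Rmult_le_pos|]; lra).
    assert (0 <= r ^ n * rho) by (apply Rmult_le_pos; lra).
    assert (0 <= r ^ n * h) by (apply Rmult_le_pos; lra).
    apply Rmult_le_compat_r; [lra|]. apply Rmax_lub; nra.
  - assert (0 <= rho + h) by lra. nra.
Qed.

Lemma trace_dist_log_bound n (m : Z) : (1 <= n)%nat -> 2 < IZR (trace_pow n) ->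
  Rabs (INR n * (phi / PI) - (1 / 2 - c / PI) - IZR m) <= 3 / INR n ->
  dist_int (IZR (trace_pow n) * th) * (sqrt (IZR (trace_pow n)) * ln (IZR (trace_pow n)))
    <= 12 * PI * rho * (ln 3 + ln lam).
Proof.
  intros Hn Hs2 Hm. pose proof PI_RGT_0.
  assert (Hlnb := ln_trace_le n Hn ltac:(lra)).
  pose proof (pow_r_sqrt_trace n ltac:(lra)). destruct (pow_r_bounds n).
  pose proof (dist_trace_theta n).
  set (t := IZR (trace_pow n)) in *.
  assert (HnR : 1 <= INR n) by (apply (le_INR 1); lia).
  assert (Hsqrt : 0 < sqrt t) by (apply sqrt_lt_R0; lra).
  assert (Hlns : 0 < ln t) by (rewrite <- ln_1; apply ln_increasing; lra).
  assert (Hcos : Rabs (cos (INR n * phi + c)) <= PI * (3 / INR n)).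
  { eapply Rle_trans; [apply Rabs_cos_le_dist with (m := m)|]. apply Rmult_le_compat_l; lra. }
  assert (Hln_n : ln t / INR n <= ln 3 + ln lam).
  { apply (Rmult_le_reg_r (INR n)); [lra|]. unfold Rdiv.
    rewrite Rmult_assoc, Rinv_l by lra. lra. }
  assert (0 <= ln t / INR n) by (apply Rmult_le_pos; [lra|apply Rlt_le, Rinv_0_lt_compat; lra]).
  apply Rle_trans with (2 * (r ^ n * rho) * (PI * (3 / INR n)) * (sqrt t * ln t)).
  - apply Rmult_le_compat_r; [apply Rmult_le_pos; lra|].
    eapply Rle_trans; [eassumption|]. apply Rmult_le_compat_l; [|exact Hcos].
    apply Rmult_le_pos; [lra|]. apply Rmult_le_pos; lra.
  - replace (2 * (r ^ n * rho) * (PI * (3 / INR n)) * (sqrt t * ln t))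
      with (6 * PI * rho * (r ^ n * sqrt t) * (ln t / INR n)) by (field; lra).
    assert (0 <= PI * rho) by (apply Rmult_le_pos; lra).
    assert (0 <= r ^ n * sqrt t) by (apply Rmult_le_pos; lra).
    apply Rle_trans with (12 * PI * rho * (ln t / INR n)); [|nra].
    apply Rmult_le_compat_r; [lra|]. nra.
Qed.

(* Shifted so that the traces exceed 2 and increase; the subsequence consists of the
   exponents [n] at which [n φ + c] is within [O(1/n)] of [π/2 + π Z]. *)
Lemma trace_peck_sequence : exists s : nat -> nat, peck_sequence th (th ^ 2) s.
Proof.
  destruct trace_pow_eventually as [N0 HN0].
  set (s := fun k => Z.to_nat (trace_pow (k + N0))).
  assert (Hs : forall k, INR (s k) = IZR (trace_pow (k + N0))).
  { intros k. apply INR_Z_to_nat, le_IZR. destruct (HN0 (k + N0)%nat); [lia|lra]. }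
  exists s. apply (peck_sequence_of_bounds _ _ _ (4 * (rho + h))
                    (12 * PI * rho * (ln 3 + ln lam))).
  - intros k. apply INR_le. rewrite Hs. destruct (HN0 (k + N0)%nat); [lia|]. simpl; lra.
  - intros k. apply INR_lt. rewrite !Hs. apply HN0. lia.
  - intros k. rewrite Hs. apply trace_dist_sqrt_bound, HN0. lia.
  - intros K.
    destruct (inhomogeneous_approximation _ (1 / 2 - c / PI) phase_irrational (K + N0))
      as [n [Hn [m Hm]]].
    exists (n - N0)%nat. split; [lia|]. rewrite Hs.
    replace (n - N0 + N0)%nat with n by lia.
    apply (trace_dist_log_bound n m); [lia|apply HN0; lia|exact Hm].
Qed.

End UnitPowers.

Theorem theorem1 (p q : Z) (theta : R)
  (Hirr : cubic_irreducible_Q p q)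
  (Hroot : theta ^ 3 - IZR p * theta - IZR q = 0)
  (Huniq : forall x : R, x ^ 3 - IZR p * x - IZR q = 0 -> x = theta) :
  exists s : nat -> nat, peck_sequence theta (theta ^ 2) s.
Proof.
  pose proof (IrreducibleCubic.irreducible_no_rational_root p q Hirr) as Hnr.
  set (v := sqrt (3 * theta ^ 2 / 4 - IZR p)).
  pose proof (complex_roots_imag_pos p q theta Hnr Hroot Huniq) as Hdisc.
  assert (Hv : 0 < v) by (apply sqrt_lt_R0; auto).
  assert (Hp : IZR p = 3 * theta ^ 2 / 4 - v ^ 2)
    by (unfold v; rewrite pow2_sqrt by lra; ring).
  assert (Hq : IZR q = theta ^ 3 - IZR p * theta) by lra.
  destruct (exists_unit p q theta v Hnr Hq Hp ltac:(lra)) as [eps [Heps Hunit]].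
  assert (Habs2 : 0 < cplx_abs2 theta v eps).
  { apply (Rmult_lt_reg_l (real_emb theta eps)); lra. }
  destruct (polar_decomposition _ _ Habs2) as [phi [Hre Him]].
  assert (Hc : 0 < (- 3 * theta / 2) ^ 2 + v ^ 2)
    by (pose proof (pow2_ge_0 (- 3 * theta / 2)); nra).
  destruct (polar_decomposition _ _ Hc) as [c [Hrho_cos Hrho_sin]].
  exact (trace_peck_sequence p q theta v Hnr Hq Hp ltac:(lra) eps _ phi Heps Hunit Hre Him
           (sqrt_lt_R0 _ Habs2) _ c (sqrt_pos _) Hrho_cos Hrho_sin).
Qed.
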